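(* Let $2\le n\le\kappa+1$, $\ell=\binom{\kappa}{n-1}$, $\beta=\kappa\ell$, and let $D\in\mathbb R^{\beta\times n\kappa^n}$ be the matrix constructed below with rows $d_1,\dots,d_\beta$. Then for $i,j=1,\dots,\beta$, $$\langle d_i,d_j\rangle=\begin{cases}0,& i\neq j,\\ n!,& i=j.\end{cases}$$
   Context: Semi-tensor product: for $A\in\mathbb R^{m\times n}$, $B\in\mathbb R^{p\times q}$ and $t=\mathrm{lcm}(n,p)$, $A\ltimes B=(A\otimes I_{t/n})(B\otimes I_{t/p})$; associative. Swap matrix $W_{[m,n]}\in\mathbb R^{mn\times mn}$: the permutation matrix with $W_{[m,n]}(X\otimes Y)=Y\otimes X$ for $X\in\mathbb R^m,Y\in\mathbb R^n$ ($W_{[1,n]}=I_n$). $\delta_\kappa^j$ is the $j$-th column of $I_\kappa$. Let $z^1,\dots,z^\ell$ be the strictly increasing tuples $(z_1<\dots<z_{n-1})$ with entries in $\{1,\dots,\kappa\}$, in lexicographic order. For $i=1,\dots,\ell$, $j=1,\dots,\kappa$ define $\eta^i_j\in\mathbb R^{\kappa^n}$ (row) by $(\eta^i_j)^T=\delta_\kappa^j\otimes\sum_{\sigma\in\mathbf S_{n-1}}\mathrm{sgn}(\sigma)\,\delta_\kappa^{z^i_{\sigma(1)}}\otimes\cdots\otimes\delta_\kappa^{z^i_{\sigma(n-1)}}$; $B\in\mathbb R^{\kappa\ell\times\kappa^n}$ has rows $\eta^1_1,\dots,\eta^1_\kappa,\dots,\eta^\ell_1,\dots,\eta^\ell_\kappa$.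 Then $D=\left[B,\,-B\ltimes W_{[\kappa^0,\kappa]}\ltimes W_{[\kappa,\kappa]},\,-B\ltimes W_{[\kappa,\kappa]}\ltimes W_{[\kappa,\kappa^2]},\dots,-B\ltimes W_{[\kappa^{n-2},\kappa]}\ltimes W_{[\kappa,\kappa^{n-1}]}\right]$. $\langle\cdot,\cdot\rangle$ is the standard inner product. *)

From HB Require Import structures.
From mathcomp Require Import all_boot all_order all_algebra all_fingroup.
From mathcomp Require Import mxtens.
Set Implicit Arguments. Unset Strict Implicit. Unset Printing Implicit Defensive.
Import Order.TTheory GRing.Theory Num.Theory.
Local Open Scope ring_scope.

(* Kronecker product: [A *t B] from mathcomp.real_closed.mxtens, with the
   standard (row-major) indexing  (i1,i2) |-> i1 * p + i2. *)

Lemma stp_dim (n p : nat) : (p * (lcmn n p %/ p) = n * (lcmn n p %/ n))%N.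
Proof.
by rewrite [(p * _)%N]mulnC [(n * _)%N]mulnC !divnK ?dvdn_lcml ?dvdn_lcmr.
Qed.

Definition stp (R : pzRingType) (m n p q : nat)
  (A : 'M[R]_(m, n)) (B : 'M[R]_(p, q))
  : 'M[R]_(m * (lcmn n p %/ n), q * (lcmn n p %/ p)) :=
  (A *t (1%:M : 'M[R]_(lcmn n p %/ n))) *m
  castmx (stp_dim n p, erefl) (B *t (1%:M : 'M[R]_(lcmn n p %/ p))).

(* ---------- canonical basis vectors (0-based): deltav k a = δ_k^{a+1} ---------- *)
Definition deltav (R : pzRingType) (k a : nat) : 'cV[R]_k :=
  \col_(b < k) (b == a :> nat)%:R.

(* ---------- swap matrix W_[m,n] = Σ_{i,j} (δ_n^j ⊗ δ_m^i)(δ_m^i ⊗ δ_n^j)^T,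
   i.e. the permutation matrix with W (X ⊗ Y) = Y ⊗ X. ---------- *)
Definition swapmx (R : pzRingType) (m n : nat) : 'M[R]_(m * n) :=
  \sum_(i < m) \sum_(j < n)
    castmx (mulnC n m, erefl) (deltav R n j *t deltav R m i)
      *m (deltav R m i *t deltav R n j)^T.

Fixpoint kronf (R : pzRingType) (kap k : nat) : ('I_k -> nat) -> 'cV[R]_(kap ^ k) :=
  match k return ('I_k -> nat) -> 'cV[R]_(kap ^ k) with
  | 0 => fun _ => const_mx 1
  | k'.+1 => fun f =>
      castmx (esym (expnS kap k'), erefl)
        (deltav R kap (f ord0) *t kronf R kap (fun t => f (lift ord0 t)))
  end.

(* ---------- the tuples z^1 < ... < z^ell (0-based entries in {0..kap-1}),
   strictly increasing, of length n-1, in lexicographic order ---------- *)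
Fixpoint lexle (s t : seq nat) : bool :=
  match s, t with
  | [::], _ => true
  | _ :: _, [::] => false
  | x :: s', y :: t' => (x < y)%N || ((x == y) && lexle s' t')
  end.

Definition ztuples (kap n : nat) : seq (seq nat) :=
  sort lexle [seq map val (tval t) |
               t <- enum [set t : (n.-1).-tuple 'I_kap | sorted ltn (map val t)]].

Definition ell (kap n : nat) : nat := 'C(kap, n.-1).

(* (η^i_j)^T = δ_κ^j ⊗ Σ_{σ ∈ S_{n-1}} sgn σ δ^{z_{σ(1)}} ⊗ ... ⊗ δ^{z_{σ(n-1)}}
   (z : seq nat is the tuple z^i, j is 0-based) *)
Definition etaT (R : pzRingType) (kap n : nat) (z : seq nat) (j : nat)
  : 'cV[R]_(kap * kap ^ n.-1) :=
  deltav R kap j *t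
    \sum_(s : 'S_(n.-1)) ((-1) ^+ odd_perm s) *: kronf R kap (fun t => nth 0%N z (s t)).

(* B ∈ R^{κℓ × κ^n}, row r = i*κ + j (0-based) is η^{i+1}_{j+1}.
   (κ * κ^(n-1) = κ^n for n ≥ 1; conform_mx performs this identification.) *)
Definition Bmat (R : pzRingType) (kap n : nat) : 'M[R]_(kap * ell kap n, kap ^ n) :=
  \matrix_(r, c)
    (conform_mx (0 : 'rV[R]_(kap ^ n))
       (etaT R kap n (nth [::] (ztuples kap n) (r %/ kap)) (r %% kap))^T) 0 c.

Definition Dblock (R : pzRingType) (kap n : nat) (k : nat)
  : 'M[R]_(kap * ell kap n, kap ^ n) :=
  if k == 0%N then Bmat R kap n
  else - conform_mx (0 : 'M[R]_(kap * ell kap n, kap ^ n))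
           (stp (stp (Bmat R kap n) (swapmx R (kap ^ k.-1) kap))
                (swapmx R kap (kap ^ k))).

Definition Dmat (R : pzRingType) (kap n : nat)
  : 'M[R]_(kap * ell kap n, \sum_(k < n) kap ^ n) :=
  mxrow (fun k : 'I_n => Dblock R kap n k).

Definition rowdot (R : pzRingType) (m c : nat) (M : 'M[R]_(m, c)) (i j : 'I_m) : R :=
  \sum_(t < c) M i t * M j t.

From HB Require Import structures.
From mathcomp Require Import all_boot all_order all_algebra all_fingroup.
From mathcomp Require Import mxtens.
Set Implicit Arguments. Unset Strict Implicit. Unset Printing Implicit Defensive.
Import Order.TTheory GRing.Theory Num.Theory.
Local Open Scope ring_scope.

(* A ⋉ W = (A ⊗ I)(W ⊗ I), and W ⊗ I is orthogonal when W is, so the Gram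
   matrix of A ⋉ W is (A Aᵀ) ⊗ I, i.e. A Aᵀ when the sizes divide.  Swap
   matrices are permutation matrices, hence every block of D has the Gram
   matrix B Bᵀ and D Dᵀ = n B Bᵀ.  A row of B is δ^j ⊗ (δ^{z_1} ∧ ⋯ ∧ δ^{z_{n-1}});
   the Kronecker monomials δ^{z_σ(1)} ⊗ ⋯ ⊗ δ^{z_σ(n-1)} of strictly increasing
   tuples z, z' and permutations σ, σ' coincide only if z = z' and σ = σ', so
   B Bᵀ = (Σ_σ sgn(σ)²) I = (n-1)! I and D Dᵀ = n! I. *)

Lemma conform_mx_castmx (R : Type) m n m' n' (B : 'M[R]_(m', n')) (A : 'M[R]_(m, n))
  (e : (m = m') * (n = n')) : conform_mx B A = castmx e A.
Proof.
case: e => em en; case: m' / em in B *; case: n' / en in B *.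
by rewrite conform_mx_id castmx_id.
Qed.

Section Gram.
Variable R : comPzRingType.

Definition gram m n (A : 'M[R]_(m, n)) : 'M[R]_m := A *m A^T.

Lemma rowdot_gram m n (A : 'M[R]_(m, n)) i j : rowdot A i j = gram A i j.
Proof. by rewrite mxE; apply: eq_bigr => t _; rewrite mxE. Qed.

Lemma gram_opp m n (A : 'M[R]_(m, n)) : gram (- A) = gram A.
Proof. by rewrite /gram linearN /= mulNmx mulmxN opprK. Qed.

Lemma gram_castmx m n m' n' (e : (m = m') * (n = n')) (A : 'M[R]_(m, n)) :
  gram (castmx e A) = castmx (e.1, e.1) (gram A).
Proof. by case: e => em en; case: m' / em; case: n' / en; rewrite !castmx_id. Qed.

Lemma gram_mulmx m n p (A : 'M[R]_(m, n)) (P : 'M[R]_(n, p)) :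
  gram P = 1%:M -> gram (A *m P) = gram A.
Proof. by rewrite /gram trmx_mul mulmxA -(mulmxA A) => ->; rewrite mulmx1. Qed.

Lemma gram_mxrow m p (q_ : 'I_p -> nat) (A_ : forall k, 'M[R]_(m, q_ k)) :
  gram (mxrow A_) = \sum_k gram (A_ k).
Proof. by rewrite /gram tr_mxrow mul_mxrow_mxcol. Qed.

Lemma gram1 n : gram (1%:M : 'M[R]_n) = 1%:M.
Proof. by rewrite /gram tr_scalar_mx mulmx1. Qed.

Lemma gram_perm_mx n (s : 'S_n) : gram (perm_mx s : 'M[R]_n) = 1%:M.
Proof. by rewrite /gram tr_perm_mx -perm_mxM mulgV perm_mx1. Qed.

Lemma tensmx11 m n : (1%:M : 'M[R]_m) *t (1%:M : 'M[R]_n) = 1%:M.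
Proof.
apply/matrixP=> i j.
case: (mxtens_indexP i) => i0 i1; case: (mxtens_indexP j) => j0 j1.
rewrite tensmxE !mxE (inj_eq (can_inj (@mxtens_indexK _ _))) xpair_eqE.
by case: (i0 == j0); case: (i1 == j1); rewrite ?mulr1 ?mulr0.
Qed.

Lemma gram_tensmx m n p q (A : 'M[R]_(m, n)) (B : 'M[R]_(p, q)) :
  gram (A *t B) = gram A *t gram B.
Proof. by rewrite /gram trmx_tens tensmx_mul. Qed.

Lemma castmx_scalar_mx m m' (e : m = m') (a : R) : castmx (e, e) a%:M = a%:M.
Proof. by case: m' / e; rewrite castmx_id. Qed.

Lemma castmx_tensmx1 m m' a (G : 'M[R]_m) (e : (m * a = m')%N) (e' : m = m') :
  a = 1%N -> castmx (e, e) (G *t (1%:M : 'M_a)) = castmx (e', e') G.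
Proof.
move=> a1; subst a; case: m' / e' e => e.
by rewrite tens_mx_scalar scale1r castmx_comp !castmx_id.
Qed.

Lemma gram_stp m N p (A : 'M[R]_(m, N)) (W : 'M[R]_p) :
  gram W = 1%:M -> gram (stp A W) = gram A *t 1%:M.
Proof.
move=> hW; rewrite gram_mulmx ?gram_tensmx ?gram1 //.
by rewrite gram_castmx gram_tensmx hW gram1 tensmx11 castmx_scalar_mx.
Qed.

End Gram.

Section SwapMatrix.
Variables m n : nat.

Definition swap_ord (b : 'I_(m * n)) : 'I_(m * n) :=
  cast_ord (mulnC n m) (mxtens_index ((mxtens_unindex b).2, (mxtens_unindex b).1)).

Lemma swap_ord_inj : injective swap_ord.
Proof.
move=> b b' /cast_ord_inj /(can_inj (@mxtens_indexK _ _)) [e2 e1].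
by apply: val_inj; rewrite /= (divn_eq b n) (divn_eq b' n) e1 e2.
Qed.

Definition swap_perm : 'S_(m * n) := perm swap_ord_inj.

Lemma swapmxE (R : pzRingType) : swapmx R m n = (perm_mx swap_perm)^T.
Proof.
apply/matrixP => a b; rewrite !mxE permE summxE.
case: (mxtens_indexP b) => i j.
rewrite -[a](cast_ordKV (mulnC n m)); case: (mxtens_indexP (cast_ord _ a)) => j' i'.
under eq_bigr do rewrite summxE.
under eq_bigr do under eq_bigr do
  rewrite !mxE big_ord1 !castmxE !mxE cast_ordK !mxtens_indexK /= !val_eqE.
rewrite (bigD1 i) //= [X in _ + X]big1 ?addr0 => [|i0 ne]; last first.
  by rewrite big1 // => i1 _; rewrite [i == _]eq_sym (negbTE ne) mul0r mulr0.
rewrite (bigD1 j) //= [X in _ + X]big1 ?addr0 => [|i1 ne]; last first.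
  by rewrite [j == _]eq_sym (negbTE ne) !mulr0.
rewrite !eqxx !mulr1 /swap_ord mxtens_indexK (inj_eq (@cast_ord_inj _ _ _)).
by rewrite (can_eq (@mxtens_indexK _ _)) xpair_eqE -natrM mulnb !(eq_sym j') !(eq_sym i').
Qed.

Lemma gram_swapmx (R : comPzRingType) : gram (swapmx R m n) = 1%:M.
Proof. by rewrite swapmxE tr_perm_mx gram_perm_mx. Qed.

End SwapMatrix.

Lemma lcmn_divn_dvdl N p : (0 < N)%N -> (p %| N)%N -> (lcmn N p %/ N = 1)%N.
Proof. by move=> N0 pN; rewrite (lcmn_idPl pN) divnn N0. Qed.

Lemma lcmn_muln_divn_dvdl N p : (p %| N)%N -> (p * (lcmn N p %/ p) = N)%N.
Proof. by move=> pN; rewrite (lcmn_idPl pN) mulnC divnK. Qed.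

Lemma gram_Dblock (R : comPzRingType) kap n (k : 'I_n) :
  gram (Dblock R kap n k) = gram (Bmat R kap n).
Proof.
rewrite /Dblock; case: eqP => // /eqP k0.
(* for kap = 0 both sides are 0 x 0 matrices *)
have [->|kap0] := posnP kap; first by apply/matrixP => -[].
have N0 : (0 < kap ^ n)%N by rewrite expn_gt0 kap0.
have d1 : (kap ^ k.-1 * kap %| kap ^ n)%N.
  by rewrite -expnSr prednK ?lt0n // dvdn_exp2l // ltnW.
have d2 : (kap * kap ^ k %| kap ^ n)%N by rewrite -expnS dvdn_exp2l.
have ea : (lcmn (kap ^ n) (kap ^ k.-1 * kap) %/ kap ^ n = 1)%N.
  exact: lcmn_divn_dvdl.
have ec : (kap ^ k.-1 * kap * (lcmn (kap ^ n) (kap ^ k.-1 * kap) %/ (kap ^ k.-1 * kap))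
           = kap ^ n)%N by exact: lcmn_muln_divn_dvdl.
have eb : (lcmn (kap ^ n) (kap * kap ^ k) %/ kap ^ n = 1)%N by exact: lcmn_divn_dvdl.
rewrite gram_opp (conform_mx_castmx _ _ (_, _)).
1, 2: by rewrite ec ?eb ?ea ?muln1 ?lcmn_muln_divn_dvdl.
move=> erows ecols; rewrite gram_castmx !gram_stp ?gram_swapmx //=.
rewrite castmx_tensmx1 ?ec //; first by rewrite ea muln1.
by move=> e; rewrite (castmx_tensmx1 _ _ (erefl _)) ?castmx_id.
Qed.

Section ColumnDot.
Variable R : comPzRingType.

Definition cdot a (u v : 'cV[R]_a) : R := \sum_(c < a) u c 0 * v c 0.

Lemma cdot_castmx a b (e : (a = b) * (1 = 1)%N) (u v : 'cV[R]_a) :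
  cdot (castmx e u) (castmx e v) = cdot u v.
Proof. by case: e => ea e1; case: b / ea; rewrite !castmx_id. Qed.

Lemma cdot_tensmx a b (u1 v1 : 'cV[R]_a) (u2 v2 : 'cV[R]_b) :
  cdot (u1 *t u2) (v1 *t v2) = cdot u1 v1 * cdot u2 v2.
Proof.
rewrite /cdot mulr_sum; apply: eq_bigr => c _; rewrite !mxE.
by rewrite !(ord1 (mxtens_unindex _).1) !(ord1 (mxtens_unindex _).2) mulrACA.
Qed.

Lemma cdot_deltav a (j j' : nat) : (j < a)%N ->
  cdot (deltav R a j) (deltav R a j') = (j == j')%:R.
Proof.
move=> ja; rewrite /cdot (bigD1 (Ordinal ja)) //= big1 => [|c /negbTE cj].
  by rewrite !mxE eqxx mul1r addr0.
by move: cj; rewrite !mxE -val_eqE /= => ->; rewrite mul0r.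
Qed.

Lemma cdot_suml a (I : finType) (F : I -> 'cV[R]_a) v :
  cdot (\sum_i F i) v = \sum_i cdot (F i) v.
Proof. by rewrite /cdot exchange_big; apply: eq_bigr => c _; rewrite summxE mulr_suml. Qed.

Lemma cdot_sumr a (I : finType) (F : I -> 'cV[R]_a) u :
  cdot u (\sum_i F i) = \sum_i cdot u (F i).
Proof. by rewrite /cdot exchange_big; apply: eq_bigr => c _; rewrite summxE mulr_sumr. Qed.

Lemma cdotZl a (x : R) (u v : 'cV[R]_a) : cdot (x *: u) v = x * cdot u v.
Proof. by rewrite /cdot mulr_sumr; apply: eq_bigr => c _; rewrite mxE mulrA. Qed.

Lemma cdotZr a (x : R) (u v : 'cV[R]_a) : cdot u (x *: v) = x * cdot u v.
Proof. by rewrite /cdot mulr_sumr; apply: eq_bigr => c _; rewrite mxE mulrCA. Qed.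

Lemma gram_cdot m n (A : 'M[R]_(m, n)) i j :
  gram A i j = cdot (row i A)^T (row j A)^T.
Proof. by rewrite mxE; apply: eq_bigr => c _; rewrite !mxE. Qed.

Lemma cdot_kronf kap k (f g : 'I_k -> nat) : (forall t, f t < kap)%N ->
  cdot (kronf R kap f) (kronf R kap g) = \prod_(t < k) (f t == g t)%:R.
Proof.
elim: k f g => [|k IH] f g fkap /=.
  by rewrite big_ord0 /cdot big_ord1 !mxE mulr1.
by rewrite cdot_castmx cdot_tensmx cdot_deltav // IH // big_ord_recl.
Qed.

End ColumnDot.

Lemma sorted_nth_perm_inj m (z z' : seq nat) (s s' : 'S_m) :
  size z = m -> size z' = m -> sorted ltn z -> sorted ltn z' ->
  (forall t, nth 0%N z (s t) = nth 0%N z' (s' t)) -> z = z' /\ s = s'.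
Proof.
move=> sz sz' srt srt' ezs.
have ez : z = z'.
  apply: (irr_sorted_eq ltn_trans ltnn srt srt') => x.
  apply/idP/idP => /(nthP 0) [i hi <-].
    have him : (i < m)%N by rewrite -sz.
    by have := ezs (s^-1 (Ordinal him))%g; rewrite permKV /= => ->; rewrite mem_nth ?sz'.
  have him : (i < m)%N by rewrite -sz'.
  by have := ezs (s'^-1 (Ordinal him))%g; rewrite permKV /= => <-; rewrite mem_nth ?sz.
split=> //; apply/permP => t; apply/val_inj/eqP.
have uz : uniq z by apply: sorted_uniq srt; [exact: ltn_trans | exact: ltnn].
by rewrite -(nth_uniq 0 _ _ uz) ?sz ?ltn_ord //; apply/eqP; move: (ezs t); rewrite -ez.
Qed.

Lemma prod_nth_perm_eq m (z z' : seq nat) (s s' : 'S_m) :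
  size z = m -> size z' = m -> sorted ltn z -> sorted ltn z' ->
  (\prod_(t < m) (nth 0%N z (s t) == nth 0%N z' (s' t)))%N = (z == z') && (s == s').
Proof.
move=> sz sz' srt srt'.
have [/forallP ezs | /forallPn [t /negbTE neq]] :=
  boolP [forall t, nth 0%N z (s t) == nth 0%N z' (s' t)].
  have [-> ->] := sorted_nth_perm_inj sz sz' srt srt' (fun t => eqP (ezs t)).
  by rewrite !eqxx big1 // => t _; rewrite eqxx.
rewrite (bigD1 t) //= neq mul0n.
by case: (z =P z') neq => [-> | //]; case: (s =P s') => [-> | //]; rewrite eqxx.
Qed.

Definition wedgev (R : pzRingType) kap m (z : seq nat) : 'cV[R]_(kap ^ m) :=
  \sum_(s : 'S_m) (-1) ^+ odd_perm s *: kronf R kap (fun t => nth 0%N z (s t)).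

Lemma cdot_wedgev (R : comPzRingType) kap m (z z' : seq nat) :
  size z = m -> size z' = m -> sorted ltn z -> sorted ltn z' ->
  all (fun x => x < kap)%N z ->
  cdot (wedgev R kap m z) (wedgev R kap m z') = (z == z')%:R * m`!%:R.
Proof.
move=> sz sz' srt srt' zkap.
have fkap (s : 'S_m) t : (nth 0%N z (s t) < kap)%N.
  by apply: (allP zkap); rewrite mem_nth ?sz.
rewrite cdot_suml.
under eq_bigr => s _ do rewrite cdotZl cdot_sumr.
under eq_bigr => s _ do under eq_bigr => s' _ do
  rewrite cdotZr cdot_kronf // -natr_prod prod_nth_perm_eq //.
have [_ | _] := eqP; last first.
  by rewrite mul0r big1 // => s _; rewrite big1 ?mulr0 // => s' _; rewrite !mulr0.
rewrite mul1r -card_Sn -sumr_const; apply: eq_bigr => s _.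
rewrite (bigD1 s) //= eqxx mulr1 big1 ?addr0 => [|s' /negbTE ss'].
  by rewrite -expr2 sqrr_sign.
by rewrite eq_sym ss' mulr0.
Qed.

Lemma size_ztuples kap n : size (ztuples kap n) = ell kap n.
Proof. by rewrite /ztuples size_sort size_map -cardE card_ltn_sorted_tuples. Qed.

Lemma ztuples_uniq kap n : uniq (ztuples kap n).
Proof.
rewrite /ztuples sort_uniq map_inj_uniq ?enum_uniq // => t1 t2 /(inj_map val_inj).
exact: val_inj.
Qed.

Lemma mem_ztuples kap n z : z \in ztuples kap n ->
  [/\ size z = n.-1, sorted ltn z & all (fun x => x < kap)%N z].
Proof.
rewrite /ztuples mem_sort => /mapP [t]; rewrite mem_enum inE => srt ->.
split=> //; first by rewrite size_map size_tuple.
by apply/allP => x /mapP [y _ ->]; apply: ltn_ord.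
Qed.

Lemma cdot_etaT (R : comPzRingType) kap n (z z' : seq nat) (j j' : nat) :
  (j < kap)%N -> z \in ztuples kap n -> z' \in ztuples kap n ->
  cdot (etaT R kap n z j) (etaT R kap n z' j')
    = ((j == j') && (z == z'))%:R * (n.-1)`!%:R.
Proof.
move=> jkap /mem_ztuples [sz srt zkap] /mem_ztuples [sz' srt' _].
rewrite cdot_tensmx cdot_deltav // -/(wedgev R kap n.-1 z) -/(wedgev R kap n.-1 z').
by rewrite cdot_wedgev // mulrA -natrM mulnb.
Qed.

Lemma row_Bmat (R : pzRingType) kap n r :
  row r (Bmat R kap n) =
    conform_mx 0 (etaT R kap n (nth [::] (ztuples kap n) (r %/ kap)) (r %% kap))^T.
Proof. by apply/rowP => c; rewrite !mxE. Qed.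

Lemma gram_Bmat (R : comPzRingType) kap n : (0 < n)%N ->
  gram (Bmat R kap n) = (n.-1)`!%:R%:M.
Proof.
move=> n0; apply/matrixP => r r'.
have kap0 : (0 < kap)%N by case: (kap) r => // -[].
have e : (kap * kap ^ n.-1 = kap ^ n)%N by rewrite -expnS prednK.
have ltr (x : 'I_(kap * ell kap n)) : (x %/ kap < size (ztuples kap n))%N.
  by rewrite size_ztuples ltn_divLR // [(ell _ _ * _)%N]mulnC.
rewrite gram_cdot !row_Bmat !trmx_conform !trmxK.
rewrite !(conform_mx_castmx _ _ (e, erefl)) cdot_castmx cdot_etaT ?ltn_mod ?mem_nth //.
rewrite (nth_uniq _ _ _ (ztuples_uniq _ _)) // mxE mulr_natl; congr (_ *+ nat_of_bool _).
apply/andP/eqP => [[/eqP emod /eqP ediv] | -> //]; apply: val_inj.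
by rewrite /= (divn_eq r kap) (divn_eq r' kap) emod ediv.
Qed.

Theorem proposition4p7 (R : realFieldType) (kap n : nat)
  (hn2 : (2 <= n)%N) (hnk : (n <= kap + 1)%N)
  (i j : 'I_(kap * ell kap n)) :
  rowdot (Dmat R kap n) i j = (if i == j then (n`!)%:R else 0).
Proof.
have n0 : (0 < n)%N := ltnW hn2.
rewrite rowdot_gram /Dmat gram_mxrow.
under eq_bigr do rewrite gram_Dblock gram_Bmat //.
rewrite sumr_const card_ord -raddfMn mxE -[in n`!](prednK n0) factS prednK //.
by case: eqP; rewrite ?mulr0n // mulr1n natrM mulr_natl.
Qed.
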